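(* Let $d\geq 2$. There exist $f_0,f_1\in\mathbb{F}_{2^d}$ such that $t^6+t^5+f_1t^4+f_0t^3+f_1t^2+t+1$ is irreducible over $\mathbb{F}_{2^d}$. *)

From mathcomp Require Export all_boot all_order all_algebra all_field.
Set Implicit Arguments.
Unset Strict Implicit.
Unset Printing Implicit Defensive.

From HB Require Import structures.
From mathcomp Require Import ring zify.
Set Implicit Arguments.
Unset Strict Implicit.
Unset Printing Implicit Defensive.
Import GRing.Theory.
Local Open Scope ring_scope.

(* Let F be a field with q = 2^d elements, d >= 2.  We pick gam in F with
   gam != 1 and nonzero absolute trace, then n in F such that the cubic
   g(y) = y^3 + y^2 + gam n y + n has no root in F, and show that
   P(z) = z^6 + z^5 + (1 + gam n) z^4 + n z^3 + (1 + gam n) z^2 + z + 1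
   is irreducible.  In characteristic 2, P(z) = z^3 g(z + 1/z).
   Irreducibility is tested on a root z of P in an extension field: it
   suffices that z is moved by the q-power Frobenius iterates Fr^k for
   0 < k < 6.  Since u = z + 1/z is a root of the rootless cubic g, its
   Frobenius orbit has length exactly 3, so only Fr^3 z = z must be excluded.
   If it held, y = z/u would satisfy y^2 + y = u^-2 with Fr^3 y = y, and
   taking the trace from F_(q^3) to F_q would give s in F with
   s^2 + s = gam^2 (by Vieta, the trace of u^-1 is gam); this contradicts
   the nonzero absolute trace of gam. *)

Section CharPower.
Variables (R : comNzRingType) (m : nat) (charRm : [pchar R].-nat m).

Definition charpow of [pchar R].-nat m := fun x : R => x ^+ m.

Lemma charpow_is_nmod_morphism : nmod_morphism (charpow charRm).
Proof.
have /andP[m_gt0 _] := charRm.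
by split=> [|x y]; rewrite /charpow ?exprDn_pchar // expr0n eqn0Ngt m_gt0.
Qed.

Lemma charpow_is_monoid_morphism : monoid_morphism (charpow charRm).
Proof. by split=> [|x y]; rewrite /charpow ?expr1n ?exprMn. Qed.

HB.instance Definition _ := GRing.isNmodMorphism.Build R R (charpow charRm)
  charpow_is_nmod_morphism.
HB.instance Definition _ := GRing.isMonoidMorphism.Build R R (charpow charRm)
  charpow_is_monoid_morphism.

End CharPower.

Lemma finField_card_pnat (F : finFieldType) : [pchar F].-nat #|F|.
Proof.
have [p p_pr charFp] := finPcharP F.
rewrite (eq_pnat _ (pcharf_eq charFp)) (card_pprimeChar charFp).
by rewrite pnatX pnat_id.
Qed.

Section QFrobenius.
Variables (F : finFieldType) (L : fieldType) (iota : {rmorphism F -> L}).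

Lemma card_pow_pnat j : [pchar L].-nat (#|F| ^ j)%N.
Proof.
by rewrite pnatX (eq_pnat _ (fmorph_pchar iota)) finField_card_pnat.
Qed.

Definition qfrob j : {rmorphism L -> L} := charpow (card_pow_pnat j).

Lemma qfrobE j x : qfrob j x = x ^+ (#|F| ^ j)%N.
Proof. by []. Qed.

Lemma qfrob_comp i j x : qfrob i (qfrob j x) = qfrob (i + j) x.
Proof. by rewrite !qfrobE -exprM -expnD addnC. Qed.

Lemma qfrob_iota j a : qfrob j (iota a) = iota a.
Proof.
rewrite qfrobE -rmorphXn; congr (iota _).
by elim: j => [|j IHj]; rewrite ?expr1 // expnS exprM expf_card.
Qed.

Lemma qfrob_fixed x : qfrob 1 x = x -> exists a, x = iota a.
Proof.
rewrite qfrobE expn1 => xq.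
have := congr1 (fun P => (map_poly iota P).[x]) (finField_genPoly F).
rewrite /= rmorphB /= map_polyXn map_polyX !hornerE xq subrr.
rewrite rmorph_prod horner_prod => /esym/eqP; rewrite prodf_seq_eq0.
case/hasP=> a _ /=; rewrite rmorphB /= map_polyX map_polyC !hornerE subr_eq0.
by move/eqP->; exists a.
Qed.

Lemma qfrob_map_root j (P : {poly F}) z :
  root (map_poly iota P) z -> root (map_poly iota P) (qfrob j z).
Proof.
move=> /rootP Pz; apply/rootP.
have -> : map_poly iota P = map_poly (qfrob j) (map_poly iota P).
  by rewrite -map_poly_comp; apply: eq_map_poly => a /=; rewrite qfrob_iota.
by rewrite horner_map Pz rmorph0.
Qed.

Lemma qfrob_mul_fixed m n x : qfrob m x = x -> qfrob (n * m) x = x.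
Proof.
move=> xm; elim: n => [|n IHn]; first by rewrite qfrobE expr1.
by rewrite mulSn -qfrob_comp IHn.
Qed.

Lemma qfrob_mod m k x : qfrob m x = x -> qfrob k x = qfrob (k %% m) x.
Proof.
by move=> xm; rewrite {1}(divn_eq k m) addnC -qfrob_comp qfrob_mul_fixed.
Qed.

(* The trace from F_(q^3) to F_q, meaningful on points fixed by Fr^3. *)
Definition qtrace3 x := x + qfrob 1 x + qfrob 2 x.

Lemma qtrace3D x y : qtrace3 (x + y) = qtrace3 x + qtrace3 y.
Proof. by rewrite /qtrace3 !rmorphD; ring. Qed.

Lemma qtrace3_fixed x : qfrob 3 x = x -> exists a, qtrace3 x = iota a.
Proof.
move=> x3; apply: qfrob_fixed.
by rewrite /qtrace3 !rmorphD !qfrob_comp x3 addrC addrA.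
Qed.

Lemma qtrace3_sqr (charL2 : (2 \in [pchar L])%N) x :
  qtrace3 (x ^+ 2) = qtrace3 x ^+ 2.
Proof.
by rewrite /qtrace3 !rmorphXn -!(pFrobenius_autE charL2) -!rmorphD.
Qed.

End QFrobenius.

Lemma finField_ext_root (F : finFieldType) (p : {poly F}) :
  (1 < size p)%N ->
  exists (L : fieldType) (iota : {rmorphism F -> L}) (z : L),
    root (map_poly iota p) z.
Proof.
move=> p_gt1; have p_neq0 : p != 0 by rewrite -size_poly_gt0 ltnW.
have [L [[|z rs] p_rs _]] := FinSplittingFieldFor p_neq0.
  move: p_rs p_gt1; rewrite big_nil => /eqp_size.
  by rewrite size_poly1 size_map_poly => ->.
exists L, (in_alg L), z.
by rewrite (eqp_root p_rs) big_cons rootM root_XsubC eqxx.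
Qed.

(* Irreducibility criterion: if each root z of p (in any extension) is moved
   by Fr^k for 0 < k < deg p, then the deg p points Fr^k z are distinct roots
   of every nonzero q in F[X] vanishing at z, so deg q >= deg p. *)
Lemma irreducible_of_qfrob_orbit (F : finFieldType) (p : {poly F}) :
  (1 < size p)%N ->
  (forall (L : fieldType) (iota : {rmorphism F -> L}) (z : L),
     root (map_poly iota p) z ->
     forall k, (0 < k < (size p).-1)%N -> qfrob iota k z != z) ->
  irreducible_poly p.
Proof.
move=> p_gt1 orbit_p.
have p_neq0 : p != 0 by rewrite -size_poly_gt0 ltnW.
have [L [iota [z pz]]] := finField_ext_root p_gt1.
apply/(subfx_irreducibleP pz p_neq0) => q qz q_neq0.
set orbit := mkseq (fun j => qfrob iota j z) (size p).-1.
have orbit_uniq : uniq orbit.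
  apply/mkseq_uniqP => i j; rewrite !inE => i_lt j_lt.
  wlog le_ij : i j i_lt j_lt / (i <= j)%N.
    move=> wlog_ij fij; case: (leqP i j) => [le_ij | /ltnW le_ji].
      exact: wlog_ij.
    exact: esym (wlog_ij j i j_lt i_lt le_ji (esym fij)).
  move=> fij; apply/eqP; rewrite eqn_leq le_ij leqNgt /=; apply/negP => lt_ij.
  have : qfrob iota (j - i) z != z.
    apply: (orbit_p _ _ _ pz).
    by rewrite subn_gt0 lt_ij (leq_ltn_trans (leq_subr i j)).
  by rewrite -(inj_eq (fmorph_inj (qfrob iota i))) qfrob_comp subnKC // fij eqxx.
have orbit_roots : all (root (map_poly iota q)) orbit.
  by apply/allP => _ /mapP[j _ ->]; apply: qfrob_map_root.
have := max_poly_roots _ orbit_roots orbit_uniq.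
rewrite map_poly_eq0 size_map_poly size_mkseq => /(_ q_neq0).
by case: (size p) p_gt1.
Qed.

Definition abs_trace (R : nzRingType) (d : nat) (x : R) := \sum_(i < d) x ^+ (2 ^ i).

Section CharTwo.
Variables (R : comNzRingType) (charR2 : (2 \in [pchar R])%N).

Lemma abs_trace_sqr d (x : R) : abs_trace d (x ^+ 2) = abs_trace d x ^+ 2.
Proof.
rewrite /abs_trace -[RHS](pFrobenius_autE charR2) rmorph_sum.
by apply: eq_bigr => i _; rewrite -exprM mulnC exprM.
Qed.

Lemma abs_trace_AS d (x : R) : abs_trace d (x ^+ 2 + x) = x ^+ (2 ^ d) + x.
Proof.
elim: d => [|d IHd]; first by rewrite /abs_trace big_ord0 expr1 addrr_pchar2.
rewrite /abs_trace in IHd *; rewrite big_ord_recr /= IHd exprDn_pchar.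
  by rewrite -exprM -expnS addrAC addrCA addrr_pchar2 // addr0.
by rewrite pnatX (pnatE _ (isT : prime 2)) charR2.
Qed.

End CharTwo.

Section TraceOverF2d.
Variables (F : finFieldType) (d : nat) (cardF : #|F| = (2 ^ d)%N).

Lemma finField_char2 : (2 \in [pchar F])%N.
Proof. exact: card_finPcharP cardF _. Qed.

(* If Tr(gam) != 0 then gam^2 is not of the form s^2 + s in F:
   Tr(s^2 + s) = s^q + s = 0 while Tr(gam^2) = Tr(gam)^2. *)
Lemma abs_trace_AS_free (gam : F) :
  abs_trace d gam != 0 -> forall s : F, s ^+ 2 + s != gam ^+ 2.
Proof.
move=> trace_gam s; apply/eqP => ASs.
have := abs_trace_AS finField_char2 d s.
rewrite ASs abs_trace_sqr ?finField_char2 // -cardF expf_card.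
rewrite addrr_pchar2 ?finField_char2 // => /eqP.
by rewrite expf_eq0 (negPf trace_gam).
Qed.

Lemma size_abs_trace_poly k :
  size (\sum_(i < k.+1) 'X^(2 ^ i) : {poly F}) = (2 ^ k).+1.
Proof.
elim: k => [|k IHk]; first by rewrite big_ord1 size_polyXn.
rewrite big_ord_recr /= addrC size_addl size_polyXn // IHk ltnS expnS.
by rewrite ltn_Pmull ?expn_gt0.
Qed.

(* Some gam != 1 has nonzero trace: otherwise the q - 1 elements other than
   1 would all be roots of the trace polynomial, of degree q/2 < q - 1. *)
Lemma exists_abs_trace_neq0 :
  (2 <= d)%N -> exists gam : F, gam != 1 /\ abs_trace d gam != 0.
Proof.
move=> d_ge2.
have [gam /andP[gam_neq1 trace_neq0] | all0] :=
  pickP [pred gam : F | (gam != 1) && (abs_trace d gam != 0)]; first by exists gam.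
case: d cardF d_ge2 all0 => [|k] // cardFk k_gt0 all0.
pose tp : {poly F} := \sum_(i < k.+1) 'X^(2 ^ i).
have tp_neq0 : tp != 0 by rewrite -size_poly_eq0 size_abs_trace_poly.
have roots_tp : all (root tp) (enum (predC1 (1 : F))).
  apply/allP => x; rewrite mem_enum inE => x_neq1.
  have /negbT := all0 x; rewrite /= x_neq1 negbK /root horner_sum.
  by under eq_bigr do rewrite hornerXn.
have := max_poly_roots tp_neq0 roots_tp (enum_uniq _).
rewrite -cardE cardC1 cardFk size_abs_trace_poly expnS.
have : (2 <= 2 ^ k)%N by rewrite -{1}(expn1 2) leq_exp2l.
lia.
Qed.

End TraceOverF2d.

Definition cubic (R : nzRingType) (b c e y : R) := y ^+ 3 + b * y ^+ 2 + c * y + e.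

Lemma rmorph_cubic (R S : nzRingType) (f : {rmorphism R -> S}) (b c e y : R) :
  f (cubic b c e y) = cubic (f b) (f c) (f e) (f y).
Proof. by rewrite /cubic !(rmorphD, rmorphM, rmorphXn). Qed.

Lemma cubic_root_solve (F : fieldType) (gam n a : F) :
  gam != 1 -> cubic 1 (gam * n) n a = 0 ->
  n = - (a ^+ 2 * (a + 1)) / (gam * a + 1).
Proof.
move=> gam_neq1 root_a.
have split_a : cubic 1 (gam * n) n a = a ^+ 2 * (a + 1) + n * (gam * a + 1).
  by rewrite /cubic; ring.
have den_neq0 : gam * a + 1 != 0.
  apply/eqP => den0; move: root_a; rewrite split_a den0 mulr0 addr0.
  move/eqP; rewrite mulf_eq0 expf_eq0 /= => /orP[/eqP a0 | ].
    by move: den0; rewrite a0 mulr0 add0r => /eqP; rewrite oner_eq0.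
  rewrite addr_eq0 => /eqP a_opp1; move: den0; rewrite a_opp1 mulrN1.
  by move/eqP; rewrite addrC subr_eq0 eq_sym (negPf gam_neq1).
apply: (mulIf den_neq0); rewrite mulfVK //.
by apply/eqP; rewrite -addr_eq0 addrC -split_a root_a.
Qed.

(* Some n makes y^3 + y^2 + gam n y + n rootless in F: otherwise every n
   would be h(a) for some a != -1, with h the function above (h 0 = 0), so h
   would map q - 1 elements onto all q elements of F. *)
Lemma exists_rootless_cubic (F : finFieldType) (gam : F) :
  gam != 1 -> exists n : F, forall a, cubic 1 (gam * n) n a != 0.
Proof.
move=> gam_neq1.
have [n /forallP rootless | all_roots] :=
  pickP [pred n : F | [forall a, cubic 1 (gam * n) n a != 0]]; first by exists n.
pose h (a : F) := - (a ^+ 2 * (a + 1)) / (gam * a + 1).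
have cover : [set: F] \subset h @: [set~ -1].
  apply/subsetP => n _; have [n0 | n_neq0] := eqVneq n 0.
    apply/imsetP; exists 0; first by rewrite !inE eq_sym oppr_eq0 oner_eq0.
    by rewrite n0 /h expr0n /= !mul0r oppr0 mul0r.
  have /negbT := all_roots n; rewrite /= negb_forall => /existsP[a].
  rewrite negbK => /eqP /(cubic_root_solve gam_neq1) n_ha.
  apply/imsetP; exists a => //; rewrite !inE.
  apply: contra n_neq0 => /eqP a_opp1.
  by rewrite n_ha a_opp1 addNr mulr0 oppr0 mul0r.
have := subset_leq_card cover; rewrite cardsT.
move/leq_trans/(_ (leq_imset_card _ _)); rewrite cardsC1.
by rewrite leqNgt ltn_predL (ltn_trans _ (finNzRing_gt1 F)).
Qed.

Section CubicOverExtension.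
Variables (F : finFieldType) (L : fieldType) (iota : {rmorphism F -> L}).
Variables (b c e : F).
Hypothesis rootless : forall a : F, cubic b c e a != 0.

Local Notation Fr := (qfrob iota).
Local Notation g := (cubic (iota b) (iota c) (iota e)).

Lemma cubic_qfrob_root j y : g y = 0 -> g (Fr j y) = 0.
Proof.
move=> gy; rewrite -(qfrob_iota iota j b) -(qfrob_iota iota j c).
by rewrite -(qfrob_iota iota j e) -rmorph_cubic gy rmorph0.
Qed.

Lemma cubic_root_not_fixed y : g y = 0 -> Fr 1 y != y.
Proof.
move=> gy; apply/eqP => /qfrob_fixed[a ya].
by have := rootless a; rewrite -(fmorph_eq0 iota) rmorph_cubic -ya gy eqxx.
Qed.

Section OneRoot.
Variables (u : L) (gu : g u = 0).
Local Notation u1 := (Fr 1 u).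
Local Notation u2 := (Fr 2 u).
Local Notation Q := (u ^+ 2 + u * u1 + u1 ^+ 2 + iota b * (u + u1) + iota c).

Lemma cubic_pair_relation : Q = 0.
Proof.
have diff : (u - u1) * Q = g u - g u1 by rewrite /cubic; ring.
move: diff; rewrite gu (cubic_qfrob_root 1 gu) subrr => /eqP.
by rewrite mulf_eq0 subr_eq0 eq_sym (negPf (cubic_root_not_fixed gu)) => /eqP.
Qed.

(* The remaining root of g is Fr^2 u: it is neither u (else the third root
   -(b + u + Fr u) would be Frobenius-fixed) nor Fr u (Fr is injective). *)
Lemma cubic_third_root : u2 = - (iota b + u + u1).
Proof.
set w := - (iota b + u + u1).
have factor y : g y = (y - u) * (y - u1) * (y - w).
  have -> : g y = (y - u) * (y - u1) * (y - w) + Q * (y - u) + g u.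
    by rewrite /w /cubic; ring.
  by rewrite cubic_pair_relation gu mul0r !addr0.
have w_not_fixed : Fr 1 w != w.
  by apply: cubic_root_not_fixed; rewrite factor subrr mulr0.
have u2_neq_u : u2 != u.
  apply: contra w_not_fixed => /eqP u2u; apply/eqP.
  by rewrite /w rmorphN !rmorphD qfrob_iota qfrob_comp u2u; ring.
have u2_neq_u1 : u2 != u1.
  by rewrite -[2%N]/(1 + 1)%N -qfrob_comp (inj_eq (fmorph_inj _))
    (cubic_root_not_fixed gu).
have := cubic_qfrob_root 2 gu; rewrite factor => /eqP.
by rewrite !mulf_eq0 !subr_eq0 (negPf u2_neq_u) (negPf u2_neq_u1) => /eqP.
Qed.

Lemma cubic_qfrob3 : Fr 3 u = u.
Proof.
rewrite -[3%N]/(1 + 2)%N -qfrob_comp cubic_third_root rmorphN !rmorphD.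
by rewrite qfrob_iota qfrob_comp cubic_third_root; ring.
Qed.

Lemma cubic_qfrob_period k : Fr k u = u -> (3 %| k)%N.
Proof.
have u1_neq_u : Fr 1 u != u := cubic_root_not_fixed gu.
rewrite (qfrob_mod k cubic_qfrob3) /dvdn.
case: (k %% 3)%N (ltn_pmod k (isT : 0 < 3)%N) => [|[|[|]]] // _ fixed.
  by move: u1_neq_u; rewrite fixed eqxx.
move: u1_neq_u; rewrite -{1}cubic_qfrob3 qfrob_comp -[(1 + 3)%N]/(2 + 2)%N.
by rewrite -qfrob_comp !fixed eqxx.
Qed.

Lemma cubic_root_neq0 : u != 0.
Proof.
apply/eqP => u0; have := rootless 0.
by rewrite -(fmorph_eq0 iota) rmorph_cubic rmorph0 -{1}u0 gu eqxx.
Qed.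

(* Vieta: the trace of u^-1 is e2 / e3 = - c / e. *)
Lemma cubic_inv_trace : u^-1 + Fr 1 u^-1 + Fr 2 u^-1 = iota (- c / e).
Proof.
have u_neq0 := cubic_root_neq0.
have [u1_neq0 u2_neq0] : u1 != 0 /\ u2 != 0 by rewrite !fmorph_eq0.
have e_neq0 : iota e != 0.
  by rewrite fmorph_eq0; have := rootless 0; rewrite /cubic !expr0n /= !mulr0 !add0r.
have e3 : u * u1 * u2 = - iota e.
  transitivity (- iota e + g u - u * Q).
    by rewrite cubic_third_root /cubic; ring.
  by rewrite gu cubic_pair_relation mulr0 addr0 subr0.
have e2 : u * u1 + u * u2 + u1 * u2 = iota c.
  transitivity (iota c - Q); first by rewrite cubic_third_root; ring.
  by rewrite cubic_pair_relation subr0.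
rewrite !fmorphV rmorphM rmorphN fmorphV.
transitivity ((u * u1 + u * u2 + u1 * u2) / (u * u1 * u2)).
  by field; rewrite u_neq0 u1_neq0 u2_neq0.
by rewrite e2 e3 invrN mulrN mulNr.
Qed.

End OneRoot.
End CubicOverExtension.

Definition sextic (R : nzRingType) (c e z : R) :=
  z ^+ 6 + z ^+ 5 + (1 + c) * z ^+ 4 + e * z ^+ 3 + (1 + c) * z ^+ 2 + z + 1.

Lemma sextic_cubic (R : fieldType) (charR2 : (2 \in [pchar R])%N) (c e z : R) :
  z != 0 -> sextic c e z = z ^+ 3 * cubic 1 c e (z + z^-1).
Proof.
move=> z_neq0.
transitivity (z ^+ 3 * cubic 1 c e (z + z^-1) - 2%:R * (z ^+ 4 + z ^+ 3 + z ^+ 2)).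
  by rewrite /sextic /cubic; field.
by rewrite (pcharf0 charR2) mul0r subr0.
Qed.

Section SexticOverExtension.
Variables (F : finFieldType) (d : nat) (cardF : #|F| = (2 ^ d)%N).
Variables (gam n : F) (trace_gam : abs_trace d gam != 0).
Hypothesis rootless : forall a : F, cubic 1 (gam * n) n a != 0.
Variables (L : fieldType) (iota : {rmorphism F -> L}).
Variables (z : L) (root_z : sextic (iota (gam * n)) (iota n) z = 0).

Local Notation Fr := (qfrob iota).
Local Notation u := (z + z^-1).

Let charL2 : (2 \in [pchar L])%N := rmorph_pchar iota (finField_char2 cardF).

Lemma sextic_root_neq0 : z != 0.
Proof.
apply/eqP => z0; move: root_z; rewrite z0 /sextic !expr0n /= !mulr0 !add0r.
by move/eqP; rewrite oner_eq0.
Qed.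

Lemma sextic_root_cubic : cubic (iota 1) (iota (gam * n)) (iota n) u = 0.
Proof.
have z_neq0 := sextic_root_neq0.
move: root_z; rewrite (sextic_cubic charL2 _ _ z_neq0) rmorph1 => /eqP.
by rewrite mulf_eq0 expf_eq0 /= (negPf z_neq0) => /eqP.
Qed.

(* The key step: Fr^3 z != z.  Otherwise y = z/u lies in F_(q^3) and
   y^2 + y = u^-2, so taking traces gives s^2 + s = gam^2 with s in F. *)
Lemma sextic_root_not_qfrob3 : Fr 3 z != z.
Proof.
have [z_neq0 gu] := (sextic_root_neq0, sextic_root_cubic).
have u_neq0 : u != 0 := cubic_root_neq0 rootless gu.
have n_neq0 : n != 0.
  by apply: contraNneq (rootless 0) => ->; rewrite /cubic !expr0n /= !mulr0 !addr0.
apply/eqP => z3; set y := z / u.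
have y3 : Fr 3 y = y by rewrite fmorph_div z3 (cubic_qfrob3 rootless gu).
have AS_y : y ^+ 2 + y = u^-1 ^+ 2.
  transitivity (u^-1 ^+ 2 + 2%:R * y ^+ 2).
    have zu : z * z + 1 = z * u by field.
    by rewrite /y; field; rewrite z_neq0 zu mulf_neq0.
  by rewrite (pcharf0 charL2) mul0r addr0.
have [s ys] := qtrace3_fixed y3.
have := qtrace3_sqr iota charL2 (u^-1).
rewrite -AS_y qtrace3D qtrace3_sqr // ys.
rewrite [qtrace3 _ _](cubic_inv_trace rootless gu) -!rmorphXn -rmorphD.
move/fmorph_inj; rewrite mulNr mulfK // sqrrN => AS_s.
by have := abs_trace_AS_free cardF trace_gam s; rewrite AS_s eqxx.
Qed.

(* z is moved by Fr^k for 0 < k < 6, as Fr^k z = z implies Fr^k u = u. *)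
Lemma sextic_root_qfrob_orbit k : (0 < k < 6)%N -> Fr k z != z.
Proof.
move=> /andP[k_gt0 k_lt6]; apply/eqP => zk.
have uk : Fr k u = u by rewrite rmorphD fmorphV zk.
have /dvdnP[m km] := cubic_qfrob_period rootless sextic_root_cubic uk.
have k3 : k = 3%N by lia.
by move/eqP: zk; rewrite k3 (negPf sextic_root_not_qfrob3).
Qed.

End SexticOverExtension.

Definition sextic_poly (R : nzRingType) (c e : R) : {poly R} :=
  'X^6 + 'X^5 + (1 + c)%:P * 'X^4 + e%:P * 'X^3 + (1 + c)%:P * 'X^2 + 'X + 1.

Lemma size_sextic_poly (R : nzRingType) (c e : R) : size (sextic_poly c e) = 7%N.
Proof.
have coefE i : (sextic_poly c e)`_i = [:: 1; 1; 1 + c; e; 1 + c; 1; 1]`_i.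
  rewrite /sextic_poly !(coefD, coefCM, coefXn, coefX, coef1).
  case: i => [|[|[|[|[|[|[|i]]]]]]];
    by rewrite /= ?(mulr0, mulr1, addr0, add0r) ?nth_nil.
apply/eqP; rewrite eqn_leq ltnNge; apply/andP; split.
  by apply/leq_sizeP => i i_ge7; rewrite coefE nth_default.
by apply/leq_sizeP => /(_ 6 (leqnn 6)) /eqP; rewrite coefE oner_eq0.
Qed.

Lemma root_map_sextic_poly (R : nzRingType) (S : comNzRingType)
    (f : {rmorphism R -> S}) (c e : R) (z : S) :
  root (map_poly f (sextic_poly c e)) z = (sextic (f c) (f e) z == 0).
Proof.
rewrite /root /sextic_poly !mul_polyC !rmorphD /= !map_polyZ !map_polyXn.
rewrite map_polyX !rmorph1 !(hornerD, hornerZ, hornerXn) hornerX hornerC.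
by rewrite rmorphD rmorph1.
Qed.

Theorem proposition7p12 (d : nat) (F : finFieldType)
  (hd : (2 <= d)%N) (hF : #|F| = (2 ^ d)%N) :
  exists f0 f1 : F,
    irreducible_poly
      ('X^6 + 'X^5 + f1%:P * 'X^4 + f0%:P * 'X^3 + f1%:P * 'X^2 + 'X + 1
        : {poly F}).
Proof.
have [gam [gam_neq1 trace_gam]] := exists_abs_trace_neq0 hF hd.
have [n rootless] := exists_rootless_cubic gam_neq1.
exists n, (1 + gam * n); rewrite -/(sextic_poly (gam * n) n).
apply: irreducible_of_qfrob_orbit => [|L iota z]; rewrite size_sextic_poly //.
rewrite root_map_sextic_poly => /eqP root_z k.
exact: (sextic_root_qfrob_orbit hF trace_gam rootless root_z).
Qed.
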